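(* Let $(\mathcal E,B,\mathcal L_{\mathcal P})$ be an epistemic space with $|\mathcal P|\ge2$. Any ES basic fusion operator that satisfies (ESF-SD), (ESF7), (ESF8W) and (ESF-I) also satisfies (ESF-D).
   Context: $[\![\phi]\!]$ denotes models; $\varphi_M$ a formula with models exactly $M$. Epistemic space: $\mathcal E$ nonempty, $B:\mathcal E\to\mathcal L_{\mathcal P}$ (propositional formulas over finite $\mathcal P$) with image modulo equivalence exactly the consistent formulas. Agents: well-ordered set $\mathcal S$; society: nonempty finite $N\subseteq\mathcal S$; $N$-profile $\Phi:N\to\mathcal E$, $E_i=\Phi(i)$, identified with $E_i$ if $N=\{i\}$; profiles on $\{i_1<\dots<i_n\}$, $\{j_1<\dots<j_m\}$ equivalent if $n=m$ and entries coincide position-wise; $\Phi\upharpoonright_M$ restriction; partition $\{N_1,N_2\}$: nonempty disjoint parts with union $N$. ES basic fusion operator: a map $\nabla(\Phi,E)\in\mathcal E$ with (ESF1) $B(\nabla(\Phi,E))\vdash B(E)$; (ESF2) equivalent profiles and $B(E)\equiv B(E')$ give equivalent $B(\nabla)$; (ESF3) if $B(E)\equiv B(E')\wedge B(E'')$ then $B(\nabla(\Phi,E'))\wedge B(E'')\vdash B(\nabla(\Phi,E))$; (ESF4) if moreover $B(\nabla(\Phi,E'))\wedge B(E'')\nvdash\bot$ then $B(\nabla(\Phi,E))\vdash B(\nabla(\Phi,E'))\wedge B(E'')$. (ESF7) $B(\nabla(\Phi\upharpoonright_{N_1},E))\wedge B(\nabla(\Phi\upharpoonright_{N_2},E))\vdash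 B(\nabla(\Phi,E))$; (ESF8W) if that conjunction is consistent then $B(\nabla(\Phi,E))\vdash B(\nabla(\Phi\upharpoonright_{N_1},E))\vee B(\nabla(\Phi\upharpoonright_{N_2},E))$. (ESF-SD): for every agent $i$, interpretations $w,w',w''$ and $E_{w,w'},E_{w',w''}$ with $[\![B(E_{w,w'})]\!]=\{w,w'\}$, $[\![B(E_{w',w''})]\!]=\{w',w''\}$, there exist $i$-profiles realising each of: (i) $B(\nabla(E_i,E_{w,w'}))\equiv\varphi_{w,w'}$ and $B(\nabla(E_i,E_{w',w''}))\equiv\varphi_{w',w''}$; (ii) $\equiv\varphi_{w,w'}$ and $\equiv\varphi_{w'}$; (iii) $\equiv\varphi_w$ and $\equiv\varphi_{w',w''}$; (iv) $\equiv\varphi_w$ and $\equiv\varphi_{w'}$. (ESF-I): for every $N$, $N$-profiles $\Phi,\Phi'$, $E$: if for every $E'$ with $B(E')\vdash B(E)$, $B(\nabla(E_j,E'))\equiv B(\nabla(E'_j,E'))$ for all $j\in N$, then $B(\nabla(\Phi,E))\equiv B(\nabla(\Phi',E))$. (ESF-D): for every society $N$ there exists $d_N\in N$ such that for every $N$-profile $\Phi$ and every $E$, $B(\nabla(\Phi,E))\vdash B(\nabla(E_{d_N},E))$. *)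

From HB Require Import structures.
From mathcomp Require Import all_boot all_order.
From Stdlib Require List.
Set Implicit Arguments. Unset Strict Implicit. Unset Printing Implicit Defensive.
Import Order.TTheory.

Inductive form (P : Type) : Type :=
  | FVar : P -> form P
  | FTop : form P
  | FBot : form P
  | FNeg : form P -> form P
  | FAnd : form P -> form P -> form P
  | FOr  : form P -> form P -> form P
  | FImp : form P -> form P -> form P.
Arguments FTop {P}. Arguments FBot {P}.

Definition interp (P : finType) := {ffun P -> bool}.

Fixpoint eval (P : finType) (v : interp P) (f : form P) : bool :=
  match f with
  | FVar p => v p
  | FTop => true
  | FBot => false
  | FNeg g => ~~ eval v g
  | FAnd g h => eval v g && eval v h
  | FOr g h => eval v g || eval v h
  | FImp g h => eval v g ==> eval v h
  end.

Definition ent (P : finType) (phi psi : form P) : Prop :=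
  forall v : interp P, eval v phi -> eval v psi.
Definition fequiv (P : finType) (phi psi : form P) : Prop :=
  ent phi psi /\ ent psi phi.
Definition consistent (P : finType) (phi : form P) : Prop :=
  exists v : interp P, eval v phi.
Definition models_are (P : finType) (phi : form P) (M : {set interp P}) : Prop :=
  forall v : interp P, eval v phi = (v \in M).

Definition epistemic_space (P : finType) (E : Type) (B : E -> form P) : Prop :=
  [/\ inhabited E,
      (forall e, consistent (B e)) &
      (forall phi : form P, consistent phi -> exists e, fequiv (B e) phi)].

(** A profile Phi : N -> E on a society N (nonempty finite subset of S) is
    represented as the list of pairs (i, E_i), i in N, sorted strictly
    increasingly by agent. *)
Section Profiles.
Context {d : Order.disp_t} {S : orderType d} {E : Type}.

Definition profile := seq (S * E)%type.

Definition society (Phi : profile) : seq S := map fst Phi.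

Definition valid_profile (Phi : profile) : Prop :=
  Phi <> [::] /\ sorted (fun p q : S * E => (p.1 < q.1)%O) Phi.

Definition valid_society (N : seq S) : Prop :=
  N <> [::] /\ sorted (fun x y : S => (x < y)%O) N.

(** equivalent profiles: same size, same entries position-wise
    (positions w.r.t. the order of agents) *)
Definition equiv_profiles (Phi Phi' : profile) : Prop :=
  map snd Phi = map snd Phi'.

Definition restr (Phi : profile) (M : seq S) : profile :=
  filter (fun p => p.1 \in M) Phi.

Definition partition2 (N N1 N2 : seq S) : Prop :=
  [/\ N1 <> [::], N2 <> [::],
      (forall x, x \in N1 -> x \notin N2) &
      (forall x, (x \in N) = (x \in N1) || (x \in N2))].

Definition single (i : S) (e : E) : profile := [:: (i, e)].

End Profiles.

Section Postulates.
Context {P : finType} {d : Order.disp_t} {S : orderType d} {E : Type}.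
Variables (B : E -> form P) (nabla : @profile d S E -> E -> E).

Definition ESF1 : Prop := forall Phi e, valid_profile Phi ->
  ent (B (nabla Phi e)) (B e).

Definition ESF2 : Prop := forall Phi Phi' e e',
  valid_profile Phi -> valid_profile Phi' -> equiv_profiles Phi Phi' ->
  fequiv (B e) (B e') -> fequiv (B (nabla Phi e)) (B (nabla Phi' e')).

Definition ESF3 : Prop := forall Phi e e' e'', valid_profile Phi ->
  fequiv (B e) (FAnd (B e') (B e'')) ->
  ent (FAnd (B (nabla Phi e')) (B e'')) (B (nabla Phi e)).

Definition ESF4 : Prop := forall Phi e e' e'', valid_profile Phi ->
  fequiv (B e) (FAnd (B e') (B e'')) ->
  consistent (FAnd (B (nabla Phi e')) (B e'')) ->
  ent (B (nabla Phi e)) (FAnd (B (nabla Phi e')) (B e'')).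

Definition basic_fusion : Prop := [/\ ESF1, ESF2, ESF3 & ESF4].

Definition ESF7 : Prop := forall Phi N1 N2 e, valid_profile Phi ->
  partition2 (society Phi) N1 N2 ->
  ent (FAnd (B (nabla (restr Phi N1) e)) (B (nabla (restr Phi N2) e)))
      (B (nabla Phi e)).

Definition ESF8W : Prop := forall Phi N1 N2 e, valid_profile Phi ->
  partition2 (society Phi) N1 N2 ->
  consistent (FAnd (B (nabla (restr Phi N1) e)) (B (nabla (restr Phi N2) e))) ->
  ent (B (nabla Phi e))
      (FOr (B (nabla (restr Phi N1) e)) (B (nabla (restr Phi N2) e))).

Definition ESF_SD : Prop :=
  forall (i : S) (w w' w'' : interp P) (e1 e2 : E),
  w != w' -> w' != w'' -> w != w'' ->
  models_are (B e1) [set w; w'] -> models_are (B e2) [set w'; w''] ->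
  [/\ exists ei, models_are (B (nabla (single i ei) e1)) [set w; w'] /\
                 models_are (B (nabla (single i ei) e2)) [set w'; w''],
      exists ei, models_are (B (nabla (single i ei) e1)) [set w; w'] /\
                 models_are (B (nabla (single i ei) e2)) [set w'],
      exists ei, models_are (B (nabla (single i ei) e1)) [set w] /\
                 models_are (B (nabla (single i ei) e2)) [set w'; w''] &
      exists ei, models_are (B (nabla (single i ei) e1)) [set w] /\
                 models_are (B (nabla (single i ei) e2)) [set w'] ].

Definition ESF_I : Prop :=
  forall (Phi Phi' : profile) (e : E),
  valid_profile Phi -> valid_profile Phi' -> society Phi = society Phi' ->
  (forall e' : E, ent (B e') (B e) ->
     forall (j : S) (ej ej' : E), List.In (j, ej) Phi -> List.In (j, ej') Phi' ->
       fequiv (B (nabla (single j ej) e')) (B (nabla (single j ej') e'))) ->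
  fequiv (B (nabla Phi e)) (B (nabla Phi' e)).

Definition ESF_D : Prop :=
  forall N : seq S, valid_society N ->
  exists2 dN : S, dN \in N &
    forall (Phi : profile) (e : E), valid_profile Phi -> society Phi = N ->
    forall edN : E, List.In (dN, edN) Phi ->
      ent (B (nabla Phi e)) (B (nabla (single dN edN) e)).

End Postulates.

From HB Require Import structures.
From mathcomp Require Import all_boot all_order.
From Stdlib Require Import IndefiniteDescription.
From Stdlib Require List.
Set Implicit Arguments. Unset Strict Implicit. Unset Printing Implicit Defensive.
Import Order.TTheory.

(* Each profile [Phi] induces a choice function [M |-> [[nabla(Phi, phi_M)]]] on
   nonempty sets of interpretations.  (ESF1)-(ESF4) make it satisfy Arrow's choice
   axiom, so its restriction to pairs is a weak order; (ESF8W) gives the Pareto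
   principle, (ESF-I) independence of irrelevant alternatives, and (ESF-SD) lets a
   single agent express every ranking of three interpretations, of which [|P| >= 2]
   provides enough.  Arrow's argument (expansion, then contraction of almost decisive
   coalitions) yields an agent decisive on every pair, and the choice axiom turns this
   pairwise dictatorship into (ESF-D). *)

Section Semantics.
Variable P : finType.
Implicit Types (f g : form P) (M : {set interp P}).

Definition mods f : {set interp P} := [set v | eval v f].

Lemma models_areE f M : models_are f M <-> mods f = M.
Proof.
split=> [H|<- v]; last by rewrite inE.
by apply/setP=> v; rewrite inE H.
Qed.

Lemma entE f g : ent f g <-> mods f \subset mods g.
Proof.
split=> [H|/subsetP H v Hv].
  by apply/subsetP=> v; rewrite !inE; apply: H.
by have := H v; rewrite !inE; apply.
Qed.

Lemma fequivE f g : fequiv f g <-> mods f = mods g.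
Proof.
rewrite /fequiv !entE; split=> [[H1 H2]|->] //.
by apply/eqP; rewrite eqEsubset H1 H2.
Qed.

Lemma consistentE f : consistent f <-> mods f != set0.
Proof.
split=> [[v Hv]|/set0Pn [v]]; last by rewrite inE; exists v.
by apply/set0Pn; exists v; rewrite inE.
Qed.

Lemma mods_and f g : mods (FAnd f g) = mods f :&: mods g.
Proof. by apply/setP=> v; rewrite !inE. Qed.

Lemma mods_or f g : mods (FOr f g) = mods f :|: mods g.
Proof. by apply/setP=> v; rewrite !inE. Qed.

Definition point_form (v : interp P) : form P :=
  foldr (fun p acc => FAnd (if v p then FVar p else FNeg (FVar p)) acc) FTop (enum P).

Lemma eval_point_form u v : eval u (point_form v) = (u == v).
Proof.
have -> : eval u (point_form v) = all (fun p => u p == v p) (enum P).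
  by rewrite /point_form; elim: (enum P) => //= p s ->; case: (v p) => /=; case: (u p).
apply/allP/eqP => [H|-> p _]; last by rewrite eqxx.
by apply/ffunP => p; apply/eqP; apply: H; rewrite mem_enum.
Qed.

Definition set_form M : form P :=
  foldr (fun v acc => FOr (point_form v) acc) FBot (enum M).

Lemma mods_set_form M : mods (set_form M) = M.
Proof.
apply/setP=> u; rewrite inE -[RHS]mem_enum /set_form.
by elim: (enum M) => //= v s ->; rewrite eval_point_form inE.
Qed.

Lemma exists_interp_neq2 : 1 < #|P| -> forall a b : interp P, exists c, (c != a) && (c != b).
Proof.
move=> hP a b; have : ~~ ([set: interp P] \subset [set a; b]).
  apply/negP => /subset_leq_card; rewrite cardsT card_ffun card_bool cards2.
  have H4 : 2 ^ 2 <= 2 ^ #|P| by apply: leq_pexp2l.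
  by move=> H; have := leq_trans H4 H; case: (a != b).
by case/subsetPn => c _; rewrite !inE negb_or; exists c.
Qed.

Lemma subset_set2 M (a b : interp P) : M \subset [set a; b] -> M != set0 ->
  [\/ M = [set a], M = [set b] | M = [set a; b]].
Proof.
move=> /subsetP HM /set0Pn [w Mw].
have [Ma|Ma] := boolP (a \in M); have [Mb|Mb] := boolP (b \in M).
- by constructor 3; apply/eqP; rewrite eqEsubset (introT subsetP HM) subUset !sub1set Ma Mb.
- constructor 1; apply/setP => v; rewrite in_set1; apply/idP/eqP => [Mv|-> //].
  by case/set2P: (HM v Mv) => // Hv; rewrite -Hv Mv in Mb.
- constructor 2; apply/setP => v; rewrite in_set1; apply/idP/eqP => [Mv|-> //].
  by case/set2P: (HM v Mv) => // Hv; rewrite -Hv Mv in Ma.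
- by case/set2P: (HM w Mw) => Hw; rewrite -Hw Mw in Ma Mb.
Qed.

End Semantics.

Lemma all_In (T : Type) (a : pred T) s x : all a s -> List.In x s -> a x.
Proof. by elim: s => //= y s IH /andP[ay al] [<-|/(IH al)]. Qed.

Section ProfileFacts.
Context {d : Order.disp_t} {S : orderType d} {E : Type}.
Implicit Types (Phi : @profile d S E) (N : seq S).

Lemma In_society Phi j e : List.In (j, e) Phi -> j \in society Phi.
Proof. by elim: Phi => //= p s IH [->|/IH]; rewrite inE ?eqxx // => ->; rewrite orbT. Qed.

Lemma society_In Phi j : j \in society Phi -> exists e, List.In (j, e) Phi.
Proof.
elim: Phi => //= -[i e] s IH; rewrite inE => /orP[/eqP ->|/IH [e' H]].
  by exists e; left.
by exists e'; right.
Qed.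

Lemma valid_single (i : S) (e : E) : valid_profile (single i e).
Proof. by []. Qed.

Lemma valid_profile_behead j e Phi : valid_profile ((j, e) :: Phi) ->
  all (fun q : S * E => (j < q.1)%O) Phi /\ sorted (fun p q : S * E => (p.1 < q.1)%O) Phi.
Proof. by case=> _ /=; rewrite path_sortedE; [case/andP | move=> ? ? ?; apply: lt_trans]. Qed.

Lemma valid_profile_In_inj Phi j e1 e2 : valid_profile Phi ->
  List.In (j, e1) Phi -> List.In (j, e2) Phi -> e1 = e2.
Proof.
elim: Phi => // -[i e] s IH /valid_profile_behead [Hall Hs].
have ltj q : List.In q s -> (i < q.1)%O by apply: all_In Hall.
case=> [[Hi He]|H1] [[Hi' He']|H2].
- by rewrite -He -He'.
- by have := ltj _ H2; rewrite /= Hi ltxx.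
- by have := ltj _ H1; rewrite /= Hi' ltxx.
- by case: s IH Hs H1 H2 {Hall ltj} => // q s IH Hs H1 H2; apply: IH.
Qed.

Lemma head_notin_society j e Phi : valid_profile ((j, e) :: Phi) -> j \notin society Phi.
Proof.
case/valid_profile_behead=> Hall _; apply/negP => /society_In [e' /(all_In Hall)].
by rewrite ltxx.
Qed.

Lemma restr_head j e Phi : valid_profile ((j, e) :: Phi) ->
  restr ((j, e) :: Phi) [:: j] = single j e.
Proof.
case/valid_profile_behead=> Hall _; rewrite /restr /= mem_seq1 eqxx.
by congr (_ :: _); elim: Phi Hall => //= q s IH /andP[jq /IH ->]; rewrite mem_seq1 gt_eqF.
Qed.

Lemma restr_tail j e Phi : valid_profile ((j, e) :: Phi) ->
  restr ((j, e) :: Phi) (society Phi) = Phi.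
Proof.
move=> HP; rewrite /restr /= (negbTE (head_notin_society HP)).
by apply/all_filterP; have := allss (society Phi); rewrite /society all_map.
Qed.

Lemma partition2_head j e Phi : Phi <> [::] -> valid_profile ((j, e) :: Phi) ->
  partition2 (society ((j, e) :: Phi)) [:: j] (society Phi).
Proof.
move=> Phi0 HP; split => //.
- by case: Phi Phi0 {HP}.
- by move=> x; rewrite mem_seq1 => /eqP ->; apply: head_notin_society HP.
- by move=> x; rewrite /= in_cons mem_seq1.
Qed.

Definition profile_of N (f : S -> E) : @profile d S E := map (fun i => (i, f i)) N.

Lemma valid_profile_of N f : valid_society N -> valid_profile (profile_of N f).
Proof. by case=> H1 H2; split; [case: N H1 H2 | rewrite /profile_of sorted_map]. Qed.

Lemma society_profile_of N f : society (profile_of N f) = N.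
Proof. by rewrite /society /profile_of -map_comp map_id. Qed.

Lemma In_profile_of N f j e : List.In (j, e) (profile_of N f) -> j \in N /\ e = f j.
Proof.
elim: N => //= i N IH [[-> ->]|/IH [H ->]]; first by rewrite inE eqxx.
by rewrite inE H orbT.
Qed.

Lemma choice_on_seq (e0 : E) (Q : S -> E -> Prop) N :
  (forall i, i \in N -> exists e, Q i e) -> exists f : S -> E, forall i, i \in N -> Q i (f i).
Proof.
elim: N => [|i N IH] H; first by exists (fun _ => e0).
have [e He] := H i (mem_head _ _).
have [f Hf] : exists f : S -> E, forall j, j \in N -> Q j (f j).
  by apply: IH => j Hj; apply: H; rewrite inE Hj orbT.
exists (fun j => if j == i then e else f j) => j; rewrite inE.
by case: eqP => [->|_] //= /Hf.
Qed.

End ProfileFacts.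

Section Fusion.
Variables (P : finType) (E : Type) (B : E -> form P).
Variables (d : Order.disp_t) (S : orderType d) (nabla : @profile d S E -> E -> E).
Variable e0 : E.
Hypothesis B_consistent : forall e, consistent (B e).
Hypothesis B_onto : forall phi : form P, consistent phi -> exists e, fequiv (B e) phi.
Hypotheses (h1 : ESF1 B nabla) (h2 : ESF2 B nabla) (h3 : ESF3 B nabla) (h4 : ESF4 B nabla).
Hypotheses (h8 : ESF8W B nabla) (hSD : ESF_SD B nabla) (hI : ESF_I B nabla).

Implicit Types (Phi : @profile d S E) (M T : {set interp P}) (a b x y z : interp P).

Lemma mods_neq0 e : mods (B e) != set0.
Proof. exact/consistentE. Qed.

Lemma rep_spec M : exists e, M != set0 -> mods (B e) = M.
Proof.
have [M0|_] := boolP (M != set0); last by exists e0.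
have [|e /fequivE he] := @B_onto (set_form M).
  by apply/consistentE; rewrite mods_set_form.
by exists e => _; rewrite he mods_set_form.
Qed.

Definition rep M : E := proj1_sig (constructive_indefinite_description _ (rep_spec M)).

Lemma mods_rep M : M != set0 -> mods (B (rep M)) = M.
Proof. by rewrite /rep; case: constructive_indefinite_description. Qed.

Definition fchoice Phi M := mods (B (nabla Phi (rep M))).

Lemma fchoice_mods Phi e : valid_profile Phi ->
  fchoice Phi (mods (B e)) = mods (B (nabla Phi e)).
Proof. by move=> HP; apply/fequivE/h2 => //; apply/fequivE; rewrite mods_rep ?mods_neq0. Qed.

Lemma fchoice_sub Phi M : valid_profile Phi -> M != set0 -> fchoice Phi M \subset M.
Proof. by move=> HP HM; rewrite -{2}(mods_rep HM); apply/entE/h1. Qed.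

Lemma fchoice_neq0 Phi M : fchoice Phi M != set0.
Proof. exact: mods_neq0. Qed.

(* Arrow's choice axiom, from (ESF3) and (ESF4). *)
Lemma fchoice_restrict Phi M T : valid_profile Phi -> T \subset M ->
  fchoice Phi M :&: T != set0 -> fchoice Phi T = fchoice Phi M :&: T.
Proof.
move=> HP HTM HI.
have HT : T != set0 by apply: contraNneq HI => ->; rewrite setI0.
have HM : M != set0 by apply: contraNneq HT => M0; rewrite -subset0 -M0.
have Heq : fequiv (B (rep T)) (FAnd (B (rep M)) (B (rep T))).
  by apply/fequivE; rewrite mods_and !mods_rep //; apply/esym/setIidPr.
have := h3 HP Heq; have := h4 HP Heq.
rewrite !entE !mods_and !mods_rep // => H4 H3.
have /H4 {}H4 : consistent (FAnd (B (nabla Phi (rep M))) (B (rep T))).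
  by apply/consistentE; rewrite mods_and mods_rep.
by apply/eqP; rewrite eqEsubset H3 H4.
Qed.

Definition pchoice Phi a b := fchoice Phi [set a; b].

Definition prefers Phi a b := b \notin pchoice Phi a b.

Lemma set2_neq0 a b : [set a; b] != set0.
Proof. by apply/set0Pn; exists a; rewrite set21. Qed.

Lemma pchoiceC Phi a b : pchoice Phi a b = pchoice Phi b a.
Proof. by rewrite /pchoice setUC. Qed.

Lemma pchoice_cases Phi a b : valid_profile Phi ->
  [\/ pchoice Phi a b = [set a], pchoice Phi a b = [set b]
     | pchoice Phi a b = [set a; b]].
Proof.
by move=> HP; apply: subset_set2 (fchoice_sub HP (set2_neq0 a b)) (fchoice_neq0 _ _).
Qed.

Lemma pchoice_prefers Phi a b : valid_profile Phi -> prefers Phi a b ->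
  pchoice Phi a b = [set a].
Proof.
by rewrite /prefers => HP; case: (pchoice_cases a b HP) => ->; rewrite ?set11 ?set22.
Qed.

Lemma prefers_set1 Phi a b : a != b -> pchoice Phi a b = [set a] -> prefers Phi a b.
Proof. by rewrite /prefers => Hab ->; rewrite inE eq_sym. Qed.

Lemma prefers_asym Phi a b : valid_profile Phi -> prefers Phi a b -> ~~ prefers Phi b a.
Proof. by move=> HP /(pchoice_prefers HP) H; rewrite /prefers negbK pchoiceC H set11. Qed.

Lemma prefers_fchoice Phi T a b : valid_profile Phi -> [set a; b] \subset T ->
  a \in fchoice Phi T -> b \notin fchoice Phi T -> prefers Phi a b.
Proof.
move=> HP HT Ha Hb; rewrite /prefers /pchoice (fchoice_restrict HP HT).
  by rewrite inE (negbTE Hb).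
by apply/set0Pn; exists a; rewrite inE Ha set21.
Qed.

Lemma fchoice_not_prefers Phi T a b : valid_profile Phi -> [set a; b] \subset T ->
  b \in fchoice Phi T -> ~~ prefers Phi a b.
Proof.
move=> HP HT Hb; rewrite /prefers negbK /pchoice (fchoice_restrict HP HT).
  by rewrite inE Hb set22.
by apply/set0Pn; exists b; rewrite inE Hb set22.
Qed.

(* Negative transitivity: the choice on [set x; y; z] decides all three pairs. *)
Lemma prefers_split Phi x y z : valid_profile Phi ->
  prefers Phi x z -> prefers Phi x y || prefers Phi y z.
Proof.
move=> HP Hxz; set T := [set x; y; z]; set C := fchoice Phi T.
have Tx : x \in T by rewrite !inE eqxx.
have Ty : y \in T by rewrite !inE eqxx orbT.
have Tz : z \in T by rewrite !inE eqxx orbT.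
have sub u v : u \in T -> v \in T -> [set u; v] \subset T.
  by move=> Hu Hv; rewrite subUset !sub1set Hu Hv.
have zC : z \notin C := contraTN (fchoice_not_prefers HP (sub _ _ Tx Tz)) Hxz.
have [yC|yC] := boolP (y \in C).
  by rewrite (prefers_fchoice HP (sub _ _ Ty Tz) yC zC) orbT.
have xC : x \in C.
  have /set0Pn [c Cc] : C != set0 := fchoice_neq0 Phi T.
  have T0 : T != set0 by apply/set0Pn; exists x.
  have : [|| c == x, c == y | c == z].
    by move: (subsetP (fchoice_sub HP T0) c Cc); rewrite !inE -orbA.
  by case/or3P => /eqP Hc; subst c => //; [rewrite Cc in yC | rewrite Cc in zC].
by rewrite (prefers_fchoice HP (sub _ _ Tx Ty) xC yC).
Qed.

Lemma prefers_trans Phi x y z : valid_profile Phi ->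
  prefers Phi x y -> prefers Phi y z -> prefers Phi x z.
Proof.
move=> HP Hxy Hyz; have := prefers_split z HP Hxy.
by rewrite (negbTE (prefers_asym HP Hyz)) orbF.
Qed.

Lemma fchoice_set1 Phi a : valid_profile Phi -> fchoice Phi [set a] = [set a].
Proof. by move=> HP; have := pchoice_cases a a HP; rewrite /pchoice setUid; case. Qed.

(* A belief entailing [B (rep [set a; b])] has models [{a}], [{b}] or [{a, b}],
   and on singletons all profiles agree. *)
Lemma pchoice_iia Phi Phi' a b : valid_profile Phi -> valid_profile Phi' ->
  society Phi = society Phi' ->
  (forall j e e', List.In (j, e) Phi -> List.In (j, e') Phi' ->
     pchoice (single j e) a b = pchoice (single j e') a b) ->
  pchoice Phi a b = pchoice Phi' a b.
Proof.
move=> HP HP' Hs H; apply/fequivE; apply: hI => // e' He' j ej ej' Hj Hj'.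
apply/fequivE; rewrite -!fchoice_mods //.
have HM : mods (B e') \subset [set a; b].
  by rewrite -(mods_rep (set2_neq0 a b)); apply/entE.
by case: (subset_set2 HM (mods_neq0 e')) => ->; rewrite ?fchoice_set1 //; apply: H.
Qed.

Lemma eq_pchoice_prefers Phi Phi' a b : valid_profile Phi -> valid_profile Phi' ->
  prefers Phi a b -> prefers Phi' a b -> pchoice Phi a b = pchoice Phi' a b.
Proof. by move=> HP HP' /(pchoice_prefers HP) -> /(pchoice_prefers HP') ->. Qed.

Lemma prefers_pareto Phi a b : valid_profile Phi ->
  (forall j e, List.In (j, e) Phi -> prefers (single j e) a b) -> prefers Phi a b.
Proof.
elim: Phi => [[]//|[j e] Phi IH] HP H.
have Hj : prefers (single j e) a b by apply: H; left.
have [->//|Phi0] : Phi = [::] \/ Phi <> [::] by case: (Phi); [left | right].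
have HPhi : valid_profile Phi by split => //; case: (valid_profile_behead HP).
have HPhiP : prefers Phi a b by apply: IH => // i ei Hi; apply: H; right.
have in_pchoice A : valid_profile A -> prefers A a b -> a \in pchoice A a b.
  by move=> HA /(pchoice_prefers HA) ->; rewrite set11.
have H8 := @h8 _ _ _ (rep [set a; b]) HP (partition2_head Phi0 HP).
rewrite restr_head // restr_tail // entE mods_or in H8.
have /H8 /subsetP sub : consistent (FAnd (B (nabla (single j e) (rep [set a; b])))
                                       (B (nabla Phi (rep [set a; b])))).
  by apply/consistentE/set0Pn; exists a; rewrite mods_and inE !in_pchoice.
by apply/negP => /sub; rewrite inE; apply/negP/norP.
Qed.

Lemma sd_patterns i x y z : x != y -> y != z -> x != z -> [/\
  exists e, pchoice (single i e) x y = [set x; y] /\ pchoice (single i e) y z = [set y],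
  exists e, pchoice (single i e) x y = [set x] /\ pchoice (single i e) y z = [set y; z] &
  exists e, pchoice (single i e) x y = [set x] /\ pchoice (single i e) y z = [set y]].
Proof.
move=> Hxy Hyz Hxz.
have M1 : models_are (B (rep [set x; y])) [set x; y] by apply/models_areE/mods_rep/set2_neq0.
have M2 : models_are (B (rep [set y; z])) [set y; z] by apply/models_areE/mods_rep/set2_neq0.
case: (hSD i Hxy Hyz Hxz M1 M2) => _ [e [? ?]] [e' [? ?]] [e'' [? ?]].
by split; [exists e | exists e' | exists e'']; split; apply/models_areE.
Qed.

Definition ranks3 Phi x y z := [/\ prefers Phi x y, prefers Phi y z & prefers Phi x z].

Lemma ranks3_realizable i x y z : x != y -> y != z -> x != z ->
  exists e, ranks3 (single i e) x y z.
Proof.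
move=> Hxy Hyz Hxz; have [_ _ [e [Exy Eyz]]] := sd_patterns i Hxy Hyz Hxz.
have Pxy := prefers_set1 Hxy Exy; have Pyz := prefers_set1 Hyz Eyz.
by exists e; split => //; apply: prefers_trans Pxy Pyz.
Qed.

Lemma top_realizable i x y z ei : x != y -> y != z -> x != z -> exists e,
  [/\ prefers (single i e) x y, prefers (single i e) x z &
      pchoice (single i e) y z = pchoice (single i ei) y z].
Proof.
move=> Hxy Hyz Hxz; case: (pchoice_cases y z (valid_single i ei)) => ->.
- have [e [Pxy Pyz Pxz]] := ranks3_realizable i Hxy Hyz Hxz.
  by exists e; split => //; apply: pchoice_prefers.
- rewrite eq_sym in Hyz.
  have [e [Pxz Pzy Pxy]] := ranks3_realizable i Hxz Hyz Hxy.
  by exists e; split => //; rewrite pchoiceC; apply: pchoice_prefers.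
- have [_ [e [Exy Eyz]] _] := sd_patterns i Hxy Hyz Hxz.
  have Pxy := prefers_set1 Hxy Exy.
  have Nzy : ~~ prefers (single i e) z y by rewrite /prefers negbK pchoiceC Eyz set21.
  exists e; split => //.
  by have := prefers_split z (valid_single i e) Pxy; rewrite (negbTE Nzy) orbF.
Qed.

Lemma bottom_realizable i x y z ei : x != y -> y != z -> x != z -> exists e,
  [/\ prefers (single i e) y x, prefers (single i e) z x &
      pchoice (single i e) y z = pchoice (single i ei) y z].
Proof.
move=> Hxy Hyz Hxz.
have Hyx : y != x by rewrite eq_sym.
have Hzx : z != x by rewrite eq_sym.
have Hzy : z != y by rewrite eq_sym.
case: (pchoice_cases y z (valid_single i ei)) => ->.
- have [e [Pyz Pzx Pyx]] := ranks3_realizable i Hyz Hzx Hyx.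
  by exists e; split => //; apply: pchoice_prefers.
- have [e [Pzy Pyx Pzx]] := ranks3_realizable i Hzy Hyx Hzx.
  by exists e; split => //; rewrite pchoiceC; apply: pchoice_prefers.
- have [[e [Eyz Ezx]] _ _] := sd_patterns i Hyz Hzx Hyx.
  have Pzx := prefers_set1 Hzx Ezx.
  have Nzy : ~~ prefers (single i e) z y by rewrite /prefers negbK pchoiceC Eyz set21.
  exists e; split => //.
  by have := prefers_split y (valid_single i e) Pzx; rewrite (negbTE Nzy).
Qed.

Section Arrow.
Variable N : seq S.
Hypothesis HN : valid_society N.
Hypothesis third_interp : forall a b : interp P, exists c, (c != a) && (c != b).

Definition agentwise (Q : S -> E -> Prop) Phi := forall j e, List.In (j, e) Phi -> Q j e.

Definition enforces (Q : S -> E -> Prop) a b := forall Phi, valid_profile Phi ->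
  society Phi = N -> agentwise Q Phi -> prefers Phi a b.

Definition decisive (G : seq S) a b :=
  enforces (fun j e => j \in G -> prefers (single j e) a b) a b.

Definition almost_decisive (G : seq S) a b :=
  enforces (fun j e => if j \in G then prefers (single j e) a b
                       else prefers (single j e) b a) a b.

Lemma decisive_almost G a b : decisive G a b -> almost_decisive G a b.
Proof. by move=> H Phi HP Hs HQ; apply: H => // j e /HQ; case: (j \in G). Qed.

Lemma enforces_pareto a b : enforces (fun j e => prefers (single j e) a b) a b.
Proof. by move=> Phi HP _; apply: prefers_pareto. Qed.

Lemma exists_profile (Q : S -> E -> Prop) : (forall i, i \in N -> exists e, Q i e) ->
  exists Phi, [/\ valid_profile Phi, society Phi = N & agentwise Q Phi].
Proof.
move=> H; have [f Hf] := choice_on_seq e0 H.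
exists (profile_of N f); split; [exact: valid_profile_of | exact: society_profile_of |].
by move=> j e He; have [Hj ->] := In_profile_of He; apply: Hf.
Qed.

(* Each agent is replaced by one with the same opinion on [{x, z}] that satisfies
   [Q1] and [Q2]; transitivity settles [x] over [z] for the new profile, and (ESF-I)
   carries the verdict back. *)
Lemma enforces_trans (Q Q1 Q2 : S -> E -> Prop) x y z :
  enforces Q1 x y -> enforces Q2 y z ->
  (forall j e, j \in N -> Q j e -> exists e',
     [/\ pchoice (single j e') x z = pchoice (single j e) x z, Q1 j e' & Q2 j e']) ->
  enforces Q x z.
Proof.
move=> H1 H2 Hre Phi HP Hs HQ.
have [|Phi' [HP' Hs' HQ']] := @exists_profile (fun j e' => exists2 e, List.In (j, e) Phi &
   [/\ pchoice (single j e') x z = pchoice (single j e) x z, Q1 j e' & Q2 j e']).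
  move=> i Ni; have [e He] : exists e, List.In (i, e) Phi by apply: society_In; rewrite Hs.
  by have [e' He'] := Hre i e Ni (HQ i e He); exists e'; exists e.
have Pxz : prefers Phi' x z.
  apply: (prefers_trans HP' (H1 _ HP' Hs' _) (H2 _ HP' Hs' _));
    by move=> j e' /(HQ' j e') [e _ [_ ? ?]].
have Exz : pchoice Phi x z = pchoice Phi' x z.
  apply: pchoice_iia => //; first by rewrite Hs Hs'.
  move=> j e e' Hj Hj'; have [e2 He2 [-> _ _]] := HQ' j e' Hj'.
  by rewrite (valid_profile_In_inj HP Hj He2).
by rewrite /prefers Exz.
Qed.

Lemma decisive_expand_r G a b c : a != b -> b != c -> a != c ->
  almost_decisive G a b -> decisive G a c.
Proof.
move=> Hab Hbc Hac Had; apply: (enforces_trans Had (@enforces_pareto b c)) => j e _ HG.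
have [jG|jG] := boolP (j \in G).
- have [e' [Pab Pbc Pac]] := ranks3_realizable j Hab Hbc Hac.
  by exists e'; split => //; apply: eq_pchoice_prefers Pac (HG jG).
- have Hba : b != a by rewrite eq_sym.
  by have [e' [Pba Pbc Eac]] := top_realizable j e Hba Hac Hbc; exists e'.
Qed.

Lemma decisive_expand_l G a b c : a != b -> b != c -> a != c ->
  almost_decisive G a b -> decisive G c b.
Proof.
move=> Hab Hbc Hac Had; apply: (enforces_trans (@enforces_pareto c a) Had) => j e _ HG.
have Hca : c != a by rewrite eq_sym.
have Hcb : c != b by rewrite eq_sym.
have [jG|jG] := boolP (j \in G).
- have [e' [Pca Pab Pcb]] := ranks3_realizable j Hca Hab Hcb.
  by exists e'; split => //; apply: eq_pchoice_prefers Pcb (HG jG).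
- by have [e' [Pca Pba Ecb]] := bottom_realizable j e Hac Hcb Hab; exists e'.
Qed.

Lemma decisive_everywhere G x y : x != y -> almost_decisive G x y ->
  forall u v, u != v -> decisive G u v.
Proof.
move=> Hxy Had.
have sym (a b : interp P) : a != b -> b != a by rewrite eq_sym.
have dec_x v : x != v -> decisive G x v.
  move=> Hxv; have [<-|Hyv] := eqVneq y v; last exact: decisive_expand_r Hxy Hyv Hxv Had.
  have [c /andP[Hcx Hcy]] := third_interp x y.
  have Hxc := decisive_expand_r Hxy (sym _ _ Hcy) (sym _ _ Hcx) Had.
  exact: decisive_expand_r (sym _ _ Hcx) Hcy Hxy (decisive_almost Hxc).
move=> u v; have [<- Hxv|Hxu Huv] := eqVneq x u; first exact: dec_x Hxv.
have [<-|Hxv] := eqVneq x v.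
  have [w /andP[Hwu Hwx]] := third_interp u x.
  have Hxw := dec_x w (sym _ _ Hwx).
  have Huw := decisive_expand_l (sym _ _ Hwx) Hwu Hxu (decisive_almost Hxw).
  exact: decisive_expand_r (sym _ _ Hwu) Hwx (sym _ _ Hxu) (decisive_almost Huw).
exact: decisive_expand_l Hxv (sym _ _ Huv) Hxu (decisive_almost (dec_x v Hxv)).
Qed.

Lemma almost_decisive_of_profile G a b Phi : valid_profile Phi -> society Phi = N ->
  agentwise (fun j e => if j \in G then prefers (single j e) a b
                        else prefers (single j e) b a) Phi ->
  prefers Phi a b -> almost_decisive G a b.
Proof.
move=> HP Hs HQ Pab Psi HPs Hss HQs.
have Eab : pchoice Psi a b = pchoice Phi a b.
  apply: pchoice_iia => //; first by rewrite Hss Hs.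
  move=> j e e' Hj Hj'; move: (HQs j e Hj) (HQ j e' Hj').
  case: (j \in G) => P1 P2; first exact: eq_pchoice_prefers P1 P2.
  by rewrite pchoiceC [RHS]pchoiceC; apply: eq_pchoice_prefers P1 P2.
by rewrite /prefers Eab.
Qed.

(* Arrow's contraction step: under the rankings [Q], [x] beats [z] only for [g]
   and [z] beats [y] only for [G]. *)
Lemma almost_decisive_split g G : g \notin G ->
  (forall a b, a != b -> decisive (g :: G) a b) ->
  (exists a b, a != b /\ almost_decisive [:: g] a b) \/
  (exists a b, a != b /\ almost_decisive G a b).
Proof.
move=> gG Hdec.
have sym (a b : interp P) : a != b -> b != a by rewrite eq_sym.
pose x : interp P := [ffun => true].
have [y /andP[Hyx _]] := third_interp x x.
have [z /andP[Hzx Hzy]] := third_interp x y.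
have [Hxy Hxz Hyz] := And3 (sym _ _ Hyx) (sym _ _ Hzx) (sym _ _ Hzy).
pose Q j e := if j \in G then ranks3 (single j e) z x y
              else if j == g then ranks3 (single j e) x y z
              else ranks3 (single j e) y z x.
have [|Phi [HP Hs HQ]] := @exists_profile Q.
  by move=> i _; rewrite /Q; case: (i \in G); last case: (i == g);
    apply: ranks3_realizable.
have Pxy : prefers Phi x y.
  apply: (Hdec x y Hxy) => // j e /(HQ j e); rewrite /Q inE.
  by case: (j \in G) => [[]|]; case: (j == g) => // -[].
have [Pxz|Nxz] := boolP (prefers Phi x z).
- left; exists x, z; split => //.
  apply: (almost_decisive_of_profile HP Hs _ Pxz) => j e /(HQ j e); rewrite /Q mem_seq1.
  case: (boolP (j \in G)) => [jG [] //|_]; last by case: (j == g) => -[].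
  by rewrite (_ : j == g = false) //; apply: contraNF gG => /eqP <-.
- right; exists z, y; split => //.
  apply: (almost_decisive_of_profile HP Hs).
    by move=> j e /(HQ j e); rewrite /Q; case: (j \in G) => [[]|]; case: (j == g) => // -[].
  by have := prefers_split z HP Pxy; rewrite (negbTE Nxz).
Qed.

Lemma decisive_singleton G : uniq G -> G != [::] ->
  (forall a b, a != b -> decisive G a b) ->
  exists2 dN, dN \in G & forall a b, a != b -> decisive [:: dN] a b.
Proof.
elim: G => [//|g G IH] /= /andP[gG uG] _ Hdec.
have [G0|G0] := eqVneq G [::]; first by subst G; exists g; rewrite ?mem_head.
case: (almost_decisive_split gG Hdec) => [[a [b [Hab Had]]]|[a [b [Hab Had]]]].
- by exists g; [exact: mem_head | exact: decisive_everywhere Hab Had].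
- have [dN HdN Hd] := IH uG G0 (decisive_everywhere Hab Had).
  by exists dN => //; rewrite inE HdN orbT.
Qed.

(* The pair [{y, v}] is decided by the dictator: [y] is in his output and [v] is not,
   while (ESF3)/(ESF4) read the social preference on the pair off the output. *)
Lemma dictator_exists : exists2 dN, dN \in N &
  forall Phi e, valid_profile Phi -> society Phi = N ->
  forall edN, List.In (dN, edN) Phi -> ent (B (nabla Phi e)) (B (nabla (single dN edN) e)).
Proof.
have uN : uniq N by case: HN => _; apply: (sorted_uniq lt_trans ltxx).
have N0 : N != [::] by case: HN => /eqP.
have decN a b : a != b -> decisive N a b.
  move=> _ Phi HP Hs HQ; apply: prefers_pareto HP _ => j e Hj; apply: (HQ j e Hj).
  by rewrite -Hs; apply: In_society Hj.
have [dN HdN Hd] := decisive_singleton uN N0 decN.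
exists dN => // Phi e HP Hs edN Hin; apply/entE/subsetP => v Hv; apply/contraT => Hv'.
have /set0Pn [y Hy] := mods_neq0 (nabla (single dN edN) e).
rewrite -!fchoice_mods // in Hv Hy Hv'.
have HT : [set y; v] \subset mods (B e).
  rewrite subUset !sub1set (subsetP (fchoice_sub HP (mods_neq0 e)) _ Hv).
  by rewrite (subsetP (fchoice_sub (valid_single _ _) (mods_neq0 e)) _ Hy).
have Hyv : y != v by apply: contraNneq Hv' => <-.
have Pyv : prefers Phi y v.
  apply: (Hd y v Hyv) => // j ej Hj; rewrite mem_seq1 => /eqP Hjd; subst j.
  rewrite (valid_profile_In_inj HP Hj Hin).
  exact: prefers_fchoice (valid_single _ _) HT Hy Hv'.
by have := fchoice_not_prefers HP HT Hv; rewrite Pyv.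
Qed.

End Arrow.
End Fusion.

Theorem corollary1 (P : finType) (hP : 1 < #|P|)
  (E : Type) (B : E -> form P) (hES : epistemic_space B)
  (d : Order.disp_t) (S : orderType d)
  (hS : well_founded (fun x y : S => (x < y)%O))
  (nabla : @profile d S E -> E -> E)
  (hbasic : basic_fusion B nabla)
  (hSD : ESF_SD B nabla) (h7 : ESF7 B nabla) (h8 : ESF8W B nabla)
  (hI : ESF_I B nabla) :
  ESF_D B nabla.
Proof.
case: hES => [[e0] B_consistent B_onto]; case: hbasic => h1 h2 h3 h4 N HN.
exact (dictator_exists e0 B_consistent B_onto h1 h2 h3 h4 h8 hSD hI HN
                       (exists_interp_neq2 hP)).
Qed.
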